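(* Let $\sigma_1,\sigma_2\subset\mathbb{Q}^n$ be strongly convex rational polyhedral cones with $\dim\sigma_1=n_1$, $\dim\sigma_2=n_2$, having $k_1$ and $k_2$ extreme rays respectively, and suppose there is $\mathbf{a}\in\sigma_1\cap\sigma_2$ with $\mathrm{span}_{\mathbb{Q}}(\sigma_1)\cap\mathrm{span}_{\mathbb{Q}}(\sigma_2)=\mathbb{Q}\mathbf{a}$. Let $\sigma=\sigma_1\oplus\sigma_2=\mathrm{pos}_{\mathbb{Q}}(\sigma_1\cup\sigma_2)$ be their direct sum along $\mathbf{a}$. Then $\dim\sigma=n_1+n_2-1$; moreover $\sigma$ has exactly $k_1+k_2$ extreme rays if the direct sum is of internal type, and exactly $k_1+k_2-1$ extreme rays if it is of external type.
   Context: $\mathrm{span}_{\mathbb{Q}}(B)$ and $\mathrm{pos}_{\mathbb{Q}}(B)$ denote the rational linear hull and the set of nonnegative rational combinations of $B$. A cone $\sigma$ is strongly convex if $\sigma\cap(-\sigma)=\{\mathbf 0\}$; its dimension is $\dim_{\mathbb{Q}}\mathrm{span}_{\mathbb{Q}}(\sigma)$. A face of $\sigma$ is a set $\sigma\cap\{\mathbf{x}:\mathbf{c}\cdot\mathbf{x}=0\}$ where $\mathbf{c}\in\mathbb{Q}^n$ satisfies $\mathbf{c}\cdot\mathbf{x}\ge0$ for all $\mathbf{x}\in\sigma$; extreme rays are the faces of dimension one, written $\mathbb{Q}_{\ge0}\mathbf{r}$. The direct sum $\sigma_1\oplus\sigma_2$ along $\mathbf{a}$ is called of external type if $\mathbf{a}$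 lies on an extreme ray of $\sigma_1$ or of $\sigma_2$ (or both), and of internal type otherwise. *)

From mathcomp Require Import all_boot all_order all_algebra.
Set Implicit Arguments. Unset Strict Implicit. Unset Printing Implicit Defensive.
Import Order.TTheory GRing.Theory Num.Theory.
Local Open Scope ring_scope.

Definition vec (n : nat) := 'rV[rat]_n.
Definition qset (n : nat) := vec n -> Prop.

Definition dot (n : nat) (c x : vec n) : rat := \sum_(i < n) c ord0 i * x ord0 i.

Definition qpos (n : nat) (B : qset n) : qset n := fun x =>
  exists (m : nat) (v : 'I_m -> vec n) (l : 'I_m -> rat),
    (forall i, B (v i)) /\ (forall i, 0 <= l i) /\ x = \sum_(i < m) l i *: v i.

Definition qspan (n : nat) (B : qset n) : qset n := fun x =>
  exists (m : nat) (v : 'I_m -> vec n) (l : 'I_m -> rat),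
    (forall i, B (v i)) /\ x = \sum_(i < m) l i *: v i.

Definition poly_cone (n : nat) (s : qset n) : Prop :=
  exists gs : seq (vec n), forall x, s x <-> qpos (fun y => y \in gs) x.

Definition strongly_convex (n : nat) (s : qset n) : Prop :=
  forall x, s x -> s (- x) -> x = 0.

(* dim_Q span_Q(S) = d : span_Q(S) has a basis of d vectors (rows of M) *)
Definition has_dim (n : nat) (S : qset n) (d : nat) : Prop :=
  exists M : 'M[rat]_(d, n),
    row_free M /\ (forall i, qspan S (row i M)) /\
    (forall x, qspan S x -> (x <= M)%MS).

Definition is_face (n : nat) (s F : qset n) : Prop :=
  exists c : vec n, (forall x, s x -> 0 <= dot c x) /\
    (forall x, F x <-> (s x /\ dot c x = 0)).

Definition is_extreme_ray (n : nat) (s F : qset n) : Prop :=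
  is_face s F /\ has_dim F 1.

Definition num_extreme_rays (n : nat) (s : qset n) (k : nat) : Prop :=
  exists f : 'I_k -> qset n,
    (forall i, is_extreme_ray s (f i)) /\
    (forall i j, (forall x, f i x <-> f j x) -> i = j) /\
    (forall F, is_extreme_ray s F -> exists i, forall x, F x <-> f i x).

Definition on_extreme_ray (n : nat) (s : qset n) (a : vec n) : Prop :=
  exists F, is_extreme_ray s F /\ F a.

Definition external_type (n : nat) (s1 s2 : qset n) (a : vec n) : Prop :=
  on_extreme_ray s1 a \/ on_extreme_ray s2 a.

From HB Require Import structures.
From mathcomp Require Import all_boot all_order all_algebra.
From mathcomp Require Import lra.
From Stdlib Require Import Classical.
Import Order.TTheory GRing.Theory Num.Theory.
Set Implicit Arguments. Unset Strict Implicit. Unset Printing Implicit Defensive.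
Local Open Scope ring_scope.

(* The cone s = s1 + s2 is spanned by span s1 + span s2, and these spaces meet in the
   line Q a, so Grassmann's formula gives dim s = n1 + n2 - 1.  Because the spans meet
   only in Q a, functionals on span s1 and on span s2 that agree on a glue to one on
   Q^n; this turns supporting functionals of faces of s1 and s2 into ones of s.  An
   extreme ray R of s1 avoiding a is extreme in s: glue a supporting functional of R
   with a multiple of a functional strictly positive on s2 \ {0}, which exists by
   Gordan's theorem (proved by Fourier-Motzkin elimination).  A ray extreme in both s1
   and s2 is Q>=0 a, and is extreme in s.  Conversely, both summands of a nonzero
   vector x1 + x2 of an extreme ray of s lie on that ray, so every extreme ray of s is
   one of s1 or of s2, and one through a is extreme in both.  So the extreme rays of s
   are those of s1 and s2 avoiding a, plus Q>=0 a when it is extreme in both; there are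
   k1 + k2 of them in the internal case and k1 + k2 - 1 in the external one. *)

Lemma dot_is_scalar n (c : vec n) : scalar (dot c).
Proof.
move=> t x y; rewrite /dot mulr_sumr -big_split /=; apply: eq_bigr => i _.
by rewrite !mxE mulrDr mulrCA.
Qed.

HB.instance Definition _ n (c : vec n) :=
  GRing.isLinear.Build rat 'rV[rat]_n rat *%R (@dot n c) (@dot_is_scalar n c).

Lemma dotC n (c x : vec n) : dot c x = dot x c.
Proof. by apply: eq_bigr => i _; rewrite mulrC. Qed.

Lemma dotE n (c x : vec n) : dot c x = (x *m c^T) 0 0.
Proof. by rewrite mxE dotC; apply: eq_bigr => i _; rewrite mxE. Qed.

Notation qcone s := (qpos (fun y => y \in s)).

Definition cat_family m1 m2 (A : Type) (f1 : 'I_m1 -> A) (f2 : 'I_m2 -> A)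
    (i : 'I_(m1 + m2)) : A :=
  match split i with inl j => f1 j | inr k => f2 k end.

Lemma forall_cat_family m1 m2 (A : Type) (P : A -> Prop)
    (f1 : 'I_m1 -> A) (f2 : 'I_m2 -> A) :
  (forall i, P (f1 i)) -> (forall i, P (f2 i)) -> forall i, P (cat_family f1 f2 i).
Proof. by move=> P1 P2 i; rewrite /cat_family; case: (split i). Qed.

Section Cones.
Variable n : nat.
Implicit Types (x y : vec n) (B S : qset n).

Record is_cone S : Prop := Cone {
  cone0 : S 0;
  coneD : forall x y, S x -> S y -> S (x + y);
  coneZ : forall t x, 0 <= t -> S x -> S (t *: x) }.

Lemma big_cat_family m1 m2 (f1 g1 : 'I_m1 -> _) (f2 g2 : 'I_m2 -> _) :
  \sum_(i < m1) f1 i *: g1 i + \sum_(i < m2) f2 i *: g2 i =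
  \sum_(i < m1 + m2) cat_family f1 f2 i *: cat_family g1 g2 i :> vec n.
Proof.
rewrite big_split_ord /cat_family; congr (_ + _); apply: eq_bigr => i _.
  by rewrite (unsplitK (inl i)).
by rewrite (unsplitK (inr i)).
Qed.

Lemma qpos_sub B x : B x -> qpos B x.
Proof.
by move=> Bx; exists 1%N, (fun _ => x), (fun _ => 1); rewrite big_ord1 scale1r.
Qed.

Lemma qpos_mono B S x : (forall y, B y -> S y) -> qpos B x -> qpos S x.
Proof.
by move=> BS [m [v [l [Bv [l_ge0 ->]]]]]; exists m, v, l; split=> // i; apply: BS.
Qed.

Lemma qpos_is_cone B : is_cone (qpos B).
Proof.
split.
- by exists 0%N, (fun _ => 0), (fun _ => 0); rewrite big_ord0; split; [case|].
- move=> _ _ [m1 [v1 [l1 [Bv1 [l1_ge0 ->]]]]] [m2 [v2 [l2 [Bv2 [l2_ge0 ->]]]]].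
  exists (m1 + m2)%N, (cat_family v1 v2), (cat_family l1 l2).
  rewrite big_cat_family; split; first exact: (forall_cat_family (P := B)).
  by split=> //; apply: (forall_cat_family (P := fun t => 0 <= t)).
- move=> t _ t_ge0 [m [v [l [Bv [l_ge0 ->]]]]]; exists m, v, (fun i => t * l i).
  rewrite scaler_sumr; split=> //; split=> [i|]; first exact: mulr_ge0.
  by apply: eq_bigr => i _; rewrite scalerA.
Qed.

Lemma qpos_sub_cone S x : is_cone S -> qpos S x -> S x.
Proof.
move=> [S0 SD SZ] [m [v [l [Sv [l_ge0 ->]]]]].
by elim/big_rec: _ => // i y _ Sy; apply: SD => //; apply: SZ.
Qed.

Lemma poly_cone_is_cone S : poly_cone S -> is_cone S.
Proof.
move=> [gs Sgs]; have [C0 CD CZ] := qpos_is_cone (fun y => y \in gs).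
by split=> [|x y /Sgs Sx /Sgs Sy|t x t_ge0 /Sgs Sx]; apply/Sgs; auto.
Qed.

Lemma strongly_convex_add_eq0 S x y :
  strongly_convex S -> S x -> S y -> x + y = 0 -> x = 0.
Proof.
by move=> Ssc Sx Sy /eqP; rewrite addr_eq0 => /eqP xE; apply: Ssc; rewrite // xE opprK.
Qed.

Lemma qspan_sub B x : B x -> qspan B x.
Proof. by move=> Bx; exists 1%N, (fun _ => x), (fun _ => 1); rewrite big_ord1 scale1r. Qed.

Lemma qspan_mono B S x : (forall y, B y -> S y) -> qspan B x -> qspan S x.
Proof. by move=> BS [m [v [l [Bv ->]]]]; exists m, v, l; split=> // i; apply: BS. Qed.

Lemma qspanZ B t x : qspan B x -> qspan B (t *: x).
Proof.
move=> [m [v [l [Bv ->]]]]; exists m, v, (fun i => t * l i); split=> //.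
by rewrite scaler_sumr; apply: eq_bigr => i _; rewrite scalerA.
Qed.

Lemma qspan0 B : qspan B 0.
Proof. by exists 0%N, (fun _ => 0), (fun _ => 0); rewrite big_ord0; split; [case|]. Qed.

Lemma qspanD B x y : qspan B x -> qspan B y -> qspan B (x + y).
Proof.
move=> [m1 [v1 [l1 [Bv1 ->]]]] [m2 [v2 [l2 [Bv2 ->]]]].
exists (m1 + m2)%N, (cat_family v1 v2), (cat_family l1 l2).
by rewrite big_cat_family; split=> //; apply: (forall_cat_family (P := B)).
Qed.

Lemma qspan_sum B m (f : 'I_m -> vec n) :
  (forall i, qspan B (f i)) -> qspan B (\sum_(i < m) f i).
Proof. by move=> Bf; elim/big_rec: _ => [|i x _]; [apply: qspan0 | apply: qspanD]. Qed.

Lemma strongly_convex_scale_ge0 S x t : is_cone S -> strongly_convex S ->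
  S x -> S (t *: x) -> x != 0 -> 0 <= t.
Proof.
move=> Scone Ssc Sx Stx x0; rewrite leNgt; apply/negP => t_lt0; move/eqP: x0; apply.
apply: Ssc Sx _.
have -> : - x = (- t)^-1 *: (t *: x).
  by rewrite scalerA invrN mulNr mulVf ?scaleN1r // lt_eqF.
by apply: (coneZ Scone) Stx; rewrite invr_ge0 oppr_ge0 ltW.
Qed.

End Cones.

Section Spans.
Variable n : nat.
Implicit Types (x y c r : vec n) (S T F : qset n).

Lemma mx_qspan m S (M : 'M[rat]_(m, n)) :
  (forall i, qspan S (row i M)) -> forall x, (x <= M)%MS -> qspan S x.
Proof.
move=> SM x /submxP [u ->]; rewrite mulmx_sum_row.
by apply: qspan_sum => i; apply: qspanZ.
Qed.

Lemma has_dim_span S d : has_dim S d ->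
  exists M : 'M[rat]_(d, n), \rank M = d /\ forall x, qspan S x <-> (x <= M)%MS.
Proof.
move=> [M [freeM [SM MS]]]; exists M; split; first exact/eqP.
by move=> x; split; [apply: MS | apply: mx_qspan].
Qed.

Lemma has_dim_rank S m (A : 'M[rat]_(m, n)) :
  (forall x, qspan S x <-> (x <= A)%MS) -> has_dim S (\rank A).
Proof.
move=> SA; exists (row_base A); split; first exact: row_base_free.
split=> [i|x /SA]; last by rewrite eq_row_base.
by apply/SA; rewrite -(eq_row_base A) row_sub.
Qed.

Lemma has_dim_ext S T d : (forall x, S x <-> T x) -> has_dim S d -> has_dim T d.
Proof.
move=> ST [M [freeM [SM MS]]]; exists M; split=> //; split=> [i|x Tx].
  by apply: qspan_mono (SM i) => y /ST.
by apply: MS; apply: qspan_mono Tx => y /ST.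
Qed.

Lemma poly_cone_span S : poly_cone S ->
  exists U : 'M[rat]_n, forall x, qspan S x <-> (x <= U)%MS.
Proof.
move=> [gs Sgs]; pose G := \matrix_(i < size gs) gs`_i.
have gsG v : v \in gs -> (v <= G)%MS.
  rewrite -index_mem => v_lt.
  have <- : row (Ordinal v_lt) G = v by rewrite rowK nth_index // -index_mem.
  exact: row_sub.
exists <<G>>%MS => x; rewrite genmxE; split.
  move=> [m [v [l [Sv ->]]]]; apply: summx_sub => i _; apply: scalemx_sub.
  have [m' [w [l' [gs_w [_ ->]]]]] := (Sgs _).1 (Sv i).
  by apply: summx_sub => j _; apply: scalemx_sub; apply: gsG.
apply: mx_qspan => i; rewrite rowK; apply/qspan_sub/Sgs/qpos_sub.
by rewrite mem_nth.
Qed.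

Lemma has_dim1_neq0 F : has_dim F 1 -> exists2 r, F r & r != 0.
Proof.
move=> [M [freeM [FM _]]]; apply: NNPP => noF.
have [m [v [l [Fv M0]]]] := FM 0.
suff: M = 0 by move=> M0'; move: freeM; rewrite /row_free M0' mxrank0.
rewrite -(row_id 0 M) M0 big1 // => i _.
by case: (eqVneq (v i) 0) => [->|vi0]; [rewrite scaler0 | case: noF; exists (v i)].
Qed.

Lemma has_dim1_mul F r x : has_dim F 1 -> F r -> r != 0 -> F x ->
  exists t, x = t *: r.
Proof.
move=> /has_dim_span [M [rkM FM]] Fr r0 Fx.
have rM : (r <= M)%MS by apply/FM/qspan_sub.
have /andP[_ Mr] : (r == M)%MS by rewrite -(mxrank_leqif_eq rM).2 rank_rV r0 rkM.
by apply/sub_rVP/(submx_trans _ Mr)/FM/qspan_sub.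
Qed.

Lemma glue_dot (U1 U2 : 'M[rat]_n) c1 c2 :
  (forall x, (x <= U1 :&: U2)%MS -> dot c1 x = dot c2 x) ->
  exists c, (forall x, (x <= U1)%MS -> dot c x = dot c1 x) /\
            (forall x, (x <= U2)%MS -> dot c x = dot c2 x).
Proof.
(* [x *m P] vanishes on [U1] and fixes the complement [U2 :\: U1] of [U1 :&: U2] in [U2]. *)
move=> c12; pose P := proj_mx (U2 :\: U1)%MS U1.
have dxU : ((U2 :\: U1) :&: U1 = 0)%MS := capmx_diff U2 U1.
have dotB x : dot (c2 - c1) x = dot c2 x - dot c1 x by rewrite dotC linearB /= !(dotC x).
exists (c1 + (c2 - c1) *m P^T).
have dotP x : dot (c1 + (c2 - c1) *m P^T) x = dot c1 x + dot (c2 - c1) (x *m P).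
  by rewrite dotC linearD /= !(dotC x) !dotE trmx_mul trmxK mulmxA.
split=> x xU; rewrite dotP; first by rewrite proj_mx_0 // linear0 addr0.
have /sub_addsmxP [[u w] /= xE] : (x <= U2 :\: U1 + U2 :&: U1)%MS.
  by rewrite addsmx_diff_cap_eq.
set z := w *m _ in xE.
have zU1 : (z <= U1)%MS by rewrite (submx_trans (submxMl _ _)) ?capmxSr.
have zU : (z <= U1 :&: U2)%MS by rewrite capmxC submxMl.
have -> : x *m P = x - z.
  by rewrite {1}xE mulmxDl proj_mx_id ?submxMl // proj_mx_0 // addr0 xE addrK.
by rewrite linearB /= !dotB (c12 _ zU) subrr subr0 addrC subrK.
Qed.

End Spans.

Section Faces.
Variable n : nat.
Implicit Types (x y r : vec n) (S T F G : qset n).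

Definition ray r : qset n := fun x => exists2 t, 0 <= t & x = t *: r.

Lemma ray_sub S r x : is_cone S -> S r -> ray r x -> S x.
Proof. by move=> Scone Sr [t t_ge0 ->]; apply: coneZ. Qed.

Lemma is_face_ext S F G : (forall x, F x <-> G x) -> is_face S F -> is_face S G.
Proof. by move=> FG [c [c_ge0 Fc]]; exists c; split=> // x; rewrite -FG. Qed.

Lemma is_extreme_ray_ext S F G :
  (forall x, F x <-> G x) -> is_extreme_ray S F -> is_extreme_ray S G.
Proof.
by move=> FG [Fface Fdim]; split; [apply: is_face_ext Fface | apply: has_dim_ext Fdim].
Qed.

Lemma face_sub S F x : is_face S F -> F x -> S x.
Proof. by move=> [c [_ Fc]] /Fc []. Qed.

Lemma face_is_cone S F : is_cone S -> is_face S F -> is_cone F.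
Proof.
move=> [S0 SD SZ] [c [_ Fc]]; split.
- by apply/Fc; rewrite linear0.
- by move=> x y /Fc [Sx cx] /Fc [Sy cy]; apply/Fc; rewrite linearD /= cx cy addr0; auto.
- by move=> t x t_ge0 /Fc [Sx cx]; apply/Fc; rewrite linearZ /= cx mulr0; auto.
Qed.

Lemma face_summand S F x y : is_face S F -> S x -> S y -> F (x + y) -> F x.
Proof.
move=> [c [c_ge0 Fc]] Sx Sy /Fc [_]; rewrite linearD /= => cxy.
by apply/Fc; split=> //; move: (c_ge0 _ Sx) (c_ge0 _ Sy); lra.
Qed.

Lemma extreme_ray_restrict S T F : is_extreme_ray S F ->
  (forall x, T x -> S x) -> (forall x, F x -> T x) -> is_extreme_ray T F.
Proof.
move=> [[c [c_ge0 Fc]] Fdim] TS FT; split=> //; exists c.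
split=> [x /TS/c_ge0 //|x]; split=> [Fx|[/TS Sx cx]]; last exact/Fc.
by split; [apply: FT | case/Fc: Fx].
Qed.

Lemma extreme_ray_eq_ray S F r : is_cone S -> strongly_convex S ->
  is_extreme_ray S F -> F r -> r != 0 -> forall x, F x <-> ray r x.
Proof.
move=> Scone Ssc [Fface Fdim] Fr r0 x; split=> [Fx|]; last first.
  by apply: ray_sub Fr; apply: face_is_cone Fface.
have [t xE] := has_dim1_mul Fdim Fr r0 Fx; exists t => //.
have Stx := face_sub Fface Fx; rewrite xE in Stx.
exact: strongly_convex_scale_ge0 Scone Ssc (face_sub Fface Fr) Stx r0.
Qed.

End Faces.

Lemma exists_between (R : realFieldType) (ls us : seq R) :
  (forall l u, l \in ls -> u \in us -> l < u) ->
  exists t, (forall l, l \in ls -> l < t) /\ (forall u, u \in us -> t < u).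
Proof.
move=> ls_us; pose M := \big[Num.max/0]_(l <- ls) l.
(* the default [M + 1] keeps [U] above [ls] even when [us] is empty *)
pose U := \big[Num.min/(M + 1)]_(u <- us) u.
have ls_U l : l \in ls -> l < U.
  move=> ls_l; rewrite /U big_seq; elim/big_ind: _ => [|x y|u /(ls_us _ _ ls_l)] //.
    have l_M : l <= M by exact: le_bigmax_seq.
    lra.
  by rewrite lt_min => -> ->.
pose L := \big[Num.max/(U - 1)]_(l <- ls) l.
have L_U : L < U.
  rewrite /L big_seq; elim/big_ind: _ => [|x y|l /ls_U] //; first lra.
  by rewrite gt_max => -> ->.
exists ((L + U) / 2); split=> [l ls_l|u us_u].
  have l_L : l <= L by exact: le_bigmax_seq.
  lra.
have U_u : U <= u by exact: ge_bigmin_seq.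
lra.
Qed.

Definition vhead n (v : vec n.+1) : rat := v 0 ord0.
Definition vbehead n (v : vec n.+1) : vec n := \row_j v 0 (lift ord0 j).
Definition vcons n (t : rat) (u : vec n) : vec n.+1 := \row_j oapp (u 0) t (unlift ord0 j).

Lemma vhead_is_scalar n : scalar (@vhead n).
Proof. by move=> t v w; rewrite /vhead !mxE. Qed.

HB.instance Definition _ n :=
  GRing.isLinear.Build rat 'rV[rat]_n.+1 rat *%R (@vhead n) (@vhead_is_scalar n).

Lemma vbehead_is_linear n : linear (@vbehead n).
Proof. by move=> t v w; apply/rowP => j; rewrite !mxE. Qed.

HB.instance Definition _ n :=
  GRing.isLinear.Build rat 'rV[rat]_n.+1 'rV[rat]_n *:%R (@vbehead n)
    (@vbehead_is_linear n).

Section FourierMotzkin.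
Variable n : nat.
Implicit Types (u : vec n) (v p q : vec n.+1) (s : seq (vec n.+1)).

Lemma dot_vcons t c v : dot (vcons t c) v = t * vhead v + dot c (vbehead v).
Proof.
rewrite /dot big_ord_recl !mxE unlift_none; congr (_ + _).
by apply: eq_bigr => i _; rewrite !mxE liftK.
Qed.

Lemma vhead_vbehead_eq0 v : vhead v = 0 -> vbehead v = 0 -> v = 0.
Proof.
move=> v0 /rowP vs0; apply/rowP => j; rewrite mxE.
by case: (unliftP ord0 j) => [k ->|->] //; have := vs0 k; rewrite !mxE.
Qed.

Definition fm_comb p q := (- vhead q) *: p + vhead p *: q.

Definition fm_elim s : seq (vec n) :=
  [seq vbehead v | v <- s & vhead v == 0] ++
  [seq vbehead (fm_comb p q) | p <- [seq v <- s | 0 < vhead v],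
                                q <- [seq v <- s | vhead v < 0]].

Lemma vhead_fm_comb p q : vhead (fm_comb p q) = 0.
Proof. by rewrite linearD !linearZ /= mulNr mulrC addNr. Qed.

Lemma fm_elim_lift s x : qcone (fm_elim s) x ->
  exists2 X, qcone s X & vhead X = 0 /\ vbehead X = x.
Proof.
have [C0 CD CZ] := qpos_is_cone (fun y => y \in s).
pose T x := exists2 X, qcone s X & vhead X = 0 /\ vbehead X = x.
move=> x_elim; apply: (@qpos_sub_cone _ T); last first.
  apply: qpos_mono x_elim => u; rewrite mem_cat => /orP [/mapP [v]|/allpairsP [[p q] /=]].
    by rewrite mem_filter => /andP [/eqP v0 s_v] ->; exists v => //; apply: qpos_sub.
  rewrite !mem_filter => -[/andP [p_gt0 s_p] /andP [q_lt0 s_q] ->].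
  exists (fm_comb p q); last by rewrite vhead_fm_comb.
  by apply: CD; apply: CZ; rewrite ?oppr_ge0 ?ltW //; apply: qpos_sub.
split.
- by exists 0; rewrite ?linear0.
- move=> _ _ [X sX [X0 <-]] [Y sY [Y0 <-]]; exists (X + Y); first exact: CD.
  by rewrite !linearD /= X0 Y0 addr0.
- move=> t _ t_ge0 [X sX [X0 <-]]; exists (t *: X); first exact: CZ.
  by rewrite !linearZ /= X0 mulr0.
Qed.

Lemma strongly_convex_fm_elim s :
  strongly_convex (qcone s) -> strongly_convex (qcone (fm_elim s)).
Proof.
move=> sc x /fm_elim_lift [X sX [X0 <-]] /fm_elim_lift [Y sY [Y0 YX]].
have XY0 : X + Y = 0.
  by apply: vhead_vbehead_eq0; rewrite linearD /= ?X0 ?Y0 ?addr0 ?YX ?subrr.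
by rewrite (strongly_convex_add_eq0 sc sX sY XY0) linear0.
Qed.

Lemma fm_comb_mem s p q : p \in s -> q \in s -> 0 < vhead p -> vhead q < 0 ->
  vbehead (fm_comb p q) \in fm_elim s.
Proof.
move=> s_p s_q p_gt0 q_lt0; rewrite mem_cat; apply/orP; right.
by apply: (allpairs_f (fun p q => vbehead (fm_comb p q))); rewrite mem_filter ?p_gt0 ?q_lt0.
Qed.

Lemma vbehead_fm_comb_neq0 s p q : strongly_convex (qcone s) ->
  p \in s -> q \in s -> 0 < vhead p -> vhead q < 0 -> vbehead (fm_comb p q) != 0.
Proof.
move=> sc s_p s_q p_gt0 q_lt0; apply/eqP => comb0.
have [_ _ CZ] := qpos_is_cone (fun y => y \in s).
have sp : qcone s ((- vhead q) *: p).
  by apply: CZ; [rewrite oppr_ge0 ltW | apply: qpos_sub].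
have sq : qcone s (vhead p *: q) by apply: CZ; [exact: ltW | apply: qpos_sub].
have /eqP : (- vhead q) *: p = 0.
  apply: strongly_convex_add_eq0 sc sp sq _.
  exact: vhead_vbehead_eq0 (vhead_fm_comb p q) comb0.
rewrite scaler_eq0 oppr_eq0 lt_eqF //= => /eqP p0.
by move: p_gt0; rewrite p0 linear0 ltxx.
Qed.

Lemma gordan_step s c' : strongly_convex (qcone s) ->
  (forall u, u \in fm_elim s -> u != 0 -> 0 < dot c' u) ->
  exists c, forall v, v \in s -> v != 0 -> 0 < dot c v.
Proof.
move=> sc c'_pos.
have comb_pos p q : p \in s -> q \in s -> 0 < vhead p -> vhead q < 0 ->
    0 < - vhead q * dot c' (vbehead p) + vhead p * dot c' (vbehead q).
  move=> s_p s_q p_gt0 q_lt0.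
  have := c'_pos _ (fm_comb_mem s_p s_q p_gt0 q_lt0)
                    (vbehead_fm_comb_neq0 sc s_p s_q p_gt0 q_lt0).
  by rewrite /fm_comb !linearD !linearZ.
pose ls := [seq - dot c' (vbehead p) / vhead p | p <- s & 0 < vhead p].
pose us := [seq dot c' (vbehead q) / - vhead q | q <- s & vhead q < 0].
have [t [ls_t t_us]] :
    exists t, (forall l, l \in ls -> l < t) /\ (forall w, w \in us -> t < w).
  apply: exists_between => _ _ /mapP [p + ->] /mapP [q + ->].
  rewrite !mem_filter => /andP [p_gt0 s_p] /andP [q_lt0 s_q].
  have := comb_pos p q s_p s_q p_gt0 q_lt0; rewrite -oppr_gt0 in q_lt0.
  rewrite ltr_pdivrMr // mulrAC ltr_pdivlMr //.
  move: (dot c' _) (dot c' _) (vhead p) (- vhead q) => A B a b; lra.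
exists (vcons t c') => v s_v v0; rewrite dot_vcons.
case: (ltgtP (vhead v) 0) => [v_lt0|v_gt0|v_eq0].
- have /t_us : dot c' (vbehead v) / - vhead v \in us.
    by apply: map_f; rewrite mem_filter v_lt0.
  rewrite ltr_pdivlMr ?oppr_gt0 //; lra.
- have /ls_t : - dot c' (vbehead v) / vhead v \in ls.
    by apply: map_f; rewrite mem_filter v_gt0.
  rewrite ltr_pdivrMr //; lra.
rewrite v_eq0 mulr0 add0r; apply: c'_pos.
  by rewrite mem_cat map_f // mem_filter v_eq0 eqxx.
by apply: contra v0 => /eqP vs0; apply/eqP/vhead_vbehead_eq0.
Qed.

End FourierMotzkin.

Lemma gordan n (s : seq (vec n)) : strongly_convex (qcone s) ->
  exists c, forall v, v \in s -> v != 0 -> 0 < dot c v.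
Proof.
elim: n s => [|n IH] s sc; first by exists 0 => v _; rewrite [v]thinmx0 eqxx.
have [c' c'_pos] := IH _ (strongly_convex_fm_elim sc).
exact: gordan_step sc c'_pos.
Qed.

Lemma strictly_positive_functional n (S : qset n) : poly_cone S -> strongly_convex S ->
  exists g, forall x, S x -> x != 0 -> 0 < dot g x.
Proof.
move=> [gs Sgs] Ssc.
have [g g_pos] : exists g, forall v, v \in gs -> v != 0 -> 0 < dot g v.
  by apply: gordan => x /Sgs Sx /Sgs Snx; apply: Ssc.
exists g => x /Sgs [m [v [l [gs_v [l_ge0 ->]]]]] x0.
have term_ge0 i : 0 <= dot g (l i *: v i).
  rewrite linearZ /=; case: (eqVneq (v i) 0) => [->|vi0]; first by rewrite linear0 mulr0.
  by rewrite mulr_ge0 // ltW // g_pos.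
rewrite raddf_sum lt_def (sumr_ge0 _ (fun i _ => term_ge0 i)) andbT; apply: contra x0.
move/eqP/(psumr_eq0P (fun i _ => term_ge0 i)) => terms0; apply/eqP/big1 => i _.
have := terms0 i isT; rewrite linearZ /=.
case: (eqVneq (v i) 0) => [-> _|vi0 /eqP]; first by rewrite scaler0.
by rewrite mulf_eq0 (gt_eqF (g_pos _ _ vi0)) // orbF => /eqP ->; rewrite scale0r.
Qed.

Section MinkowskiSum.
Variable n : nat.
Implicit Types (x y z : vec n) (S T : qset n).

Definition msum S T : qset n := fun x => exists y z, [/\ S y, T z & x = y + z].

Lemma msumC S T x : msum S T x -> msum T S x.
Proof. by move=> [y [z [Sy Tz ->]]]; exists z, y; rewrite addrC. Qed.

Lemma msum_subl S T x : T 0 -> S x -> msum S T x.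
Proof. by move=> T0 Sx; exists x, 0; rewrite addr0. Qed.

Lemma msum_subr S T x : S 0 -> T x -> msum S T x.
Proof. by move=> S0 Tx; exists 0, x; rewrite add0r. Qed.

Lemma msum_is_cone S T : is_cone S -> is_cone T -> is_cone (msum S T).
Proof.
move=> [S0 SD SZ] [T0 TD TZ]; split.
- exact: msum_subl.
- move=> _ _ [y [z [Sy Tz ->]]] [y' [z' [Sy' Tz' ->]]].
  by exists (y + y'), (z + z'); rewrite addrACA; split; auto.
- move=> t _ t_ge0 [y [z [Sy Tz ->]]].
  by exists (t *: y), (t *: z); rewrite scalerDr; split; auto.
Qed.

Lemma qpos_union_msum S T x : is_cone S -> is_cone T ->
  qpos (fun y => S y \/ T y) x <-> msum S T x.
Proof.
move=> Scone Tcone; split.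
  move=> STx; apply: qpos_sub_cone (msum_is_cone Scone Tcone) _.
  apply: qpos_mono STx => y [Sy|Ty].
    exact: msum_subl (cone0 Tcone) Sy.
  exact: msum_subr (cone0 Scone) Ty.
move=> [y [z [Sy Tz ->]]].
by apply: (coneD (qpos_is_cone _)); apply: qpos_sub; [left | right].
Qed.

Lemma qspan_msum S T m1 m2 (A : 'M[rat]_(m1, n)) (B : 'M[rat]_(m2, n)) :
  S 0 -> T 0 ->
  (forall x, qspan S x <-> (x <= A)%MS) -> (forall x, qspan T x <-> (x <= B)%MS) ->
  forall x, qspan (msum S T) x <-> (x <= A + B)%MS.
Proof.
move=> S0 T0 SA TB x; split.
  move=> [m [v [l [STv ->]]]]; apply: summx_sub => i _; apply: scalemx_sub.
  have [y [z [Sy Tz ->]]] := STv i.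
  by apply: addmx_sub_adds; [apply/SA | apply/TB]; apply: qspan_sub.
move=> /sub_addsmxP [[u w] /= ->]; apply: qspanD.
  by apply: (qspan_mono (fun y => msum_subl T0)); apply/SA/submxMl.
by apply: (qspan_mono (fun y => msum_subr S0)); apply/TB/submxMl.
Qed.

End MinkowskiSum.

Record is_direct_sum n (s1 s2 s : qset n) (a : vec n) : Prop := DirectSum {
  dsum_poly_cone1 : poly_cone s1;
  dsum_poly_cone2 : poly_cone s2;
  dsum_strongly_convex1 : strongly_convex s1;
  dsum_strongly_convex2 : strongly_convex s2;
  dsum_a_neq0 : a != 0;
  dsum_a1 : s1 a;
  dsum_a2 : s2 a;
  dsum_span_cap : forall x, qspan s1 x -> qspan s2 x -> exists t, x = t *: a;
  dsumE : forall x, s x <-> msum s1 s2 x }.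

Lemma is_direct_sumC n (s1 s2 s : qset n) a :
  is_direct_sum s1 s2 s a -> is_direct_sum s2 s1 s a.
Proof.
case=> ? ? ? ? ? ? ? cap sE; split=> // [x x2 x1|x]; first exact: cap.
by rewrite sE; split; apply: msumC.
Qed.

Section DirectSum.
Variables (n : nat) (s1 s2 s : qset n) (a : vec n).
Hypothesis D : is_direct_sum s1 s2 s a.
Implicit Types (x y z u w c : vec n) (F R : qset n).

Let cone1 := poly_cone_is_cone (dsum_poly_cone1 D).
Let cone2 := poly_cone_is_cone (dsum_poly_cone2 D).
Let sc1 := dsum_strongly_convex1 D.
Let sc2 := dsum_strongly_convex2 D.

Lemma dsum_subl x : s1 x -> s x.
Proof. by move=> s1x; apply/(dsumE D); apply: msum_subl (cone0 cone2) s1x. Qed.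

Lemma dsum_subr x : s2 x -> s x.
Proof. by move=> s2x; apply/(dsumE D); apply: msum_subr (cone0 cone1) s2x. Qed.

Lemma dsum_is_cone : is_cone s.
Proof.
have [S0 SD SZ] := msum_is_cone cone1 cone2; have sE := dsumE D.
by split=> [|x y /sE sx /sE sy|t x t_ge0 /sE sx]; apply/sE; auto.
Qed.

Lemma dsum_add_eq0 u w : s1 u -> s2 w -> u + w = 0 -> u = 0.
Proof.
move=> s1u s2w uw0.
have [t uE] : exists t, u = t *: a.
  apply: (dsum_span_cap D (qspan_sub s1u)).
  have -> : u = (-1) *: w by rewrite scaleN1r; apply/eqP; rewrite -addr_eq0 uw0.
  exact/qspanZ/qspan_sub.
case: (leP 0 t) => [t_ge0|t_lt0].
  have w0 : w = 0.
    apply: (strongly_convex_add_eq0 sc2 s2w (coneZ cone2 t_ge0 (dsum_a2 D))).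
    by rewrite -uE addrC.
  by move: uw0; rewrite w0 addr0.
have s1ta : s1 ((- t) *: a) by apply: (coneZ cone1) (dsum_a1 D); rewrite oppr_ge0 ltW.
by apply: (strongly_convex_add_eq0 sc1 s1u s1ta); rewrite uE scaleNr subrr.
Qed.

Lemma dsum_strongly_convex : strongly_convex s.
Proof.
move=> x /(dsumE D) [x1 [x2 [s1x1 s2x2 ->]]] /(dsumE D) [y1 [y2 [s1y1 s2y2 yE]]].
have sum0 : (x1 + y1) + (x2 + y2) = 0 by rewrite addrACA -yE subrr.
have xy1 := dsum_add_eq0 (coneD cone1 s1x1 s1y1) (coneD cone2 s2x2 s2y2) sum0.
have xy2 : x2 + y2 = 0 by rewrite -sum0 xy1 add0r.
rewrite (strongly_convex_add_eq0 sc1 s1x1 s1y1 xy1).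
by rewrite (strongly_convex_add_eq0 sc2 s2x2 s2y2 xy2) addr0.
Qed.

Lemma dsum_span_capmx m1 m2 (A1 : 'M[rat]_(m1, n)) (A2 : 'M[rat]_(m2, n)) :
  (forall x, qspan s1 x <-> (x <= A1)%MS) -> (forall x, qspan s2 x <-> (x <= A2)%MS) ->
  (A1 :&: A2 :=: a)%MS.
Proof.
move=> s1A1 s2A2; apply/eqmxP/andP; split.
  apply/row_subP => i; have := row_sub i (A1 :&: A2)%MS.
  rewrite sub_capmx => /andP [/s1A1 x1 /s2A2 x2].
  by have [t ->] := dsum_span_cap D x1 x2; rewrite scalemx_sub.
rewrite sub_capmx; apply/andP; split; [apply/s1A1 | apply/s2A2]; apply: qspan_sub.
  exact: dsum_a1 D.
exact: dsum_a2 D.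
Qed.

Lemma has_dim_dsum n1 n2 : has_dim s1 n1 -> has_dim s2 n2 -> has_dim s (n1 + n2 - 1).
Proof.
move=> /has_dim_span [M1 [rk1 s1M1]] /has_dim_span [M2 [rk2 s2M2]].
have sM x : qspan s x <-> (x <= M1 + M2)%MS.
  apply: iff_trans (qspan_msum (cone0 cone1) (cone0 cone2) s1M1 s2M2 x).
  by split; apply: qspan_mono => y /(dsumE D).
have rk_cap : \rank (M1 :&: M2)%MS = 1%N.
  by rewrite (dsum_span_capmx s1M1 s2M2) rank_rV (dsum_a_neq0 D).
have := mxrank_sum_cap M1 M2; rewrite rk_cap rk1 rk2 => <-.
by rewrite addnK; apply: has_dim_rank sM.
Qed.

Lemma dsum_glue c1 c2 : dot c1 a = dot c2 a ->
  exists c, (forall x, s1 x -> dot c x = dot c1 x) /\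
            (forall x, s2 x -> dot c x = dot c2 x).
Proof.
move=> c12a; have [U1 s1U1] := poly_cone_span (dsum_poly_cone1 D).
have [U2 s2U2] := poly_cone_span (dsum_poly_cone2 D).
have [|c [cU1 cU2]] := @glue_dot _ U1 U2 c1 c2.
  move=> x; rewrite (dsum_span_capmx s1U1 s2U2) => /sub_rVP [t ->].
  by rewrite !linearZ /= c12a.
exists c; split=> x sx; [apply/cU1/s1U1 | apply/cU2/s2U2]; exact: qspan_sub.
Qed.

Lemma dsum_face c1 c2 :
  (forall x, s1 x -> 0 <= dot c1 x) -> (forall x, s2 x -> 0 <= dot c2 x) ->
  dot c1 a = dot c2 a ->
  is_face s (msum (fun x => s1 x /\ dot c1 x = 0) (fun x => s2 x /\ dot c2 x = 0)).
Proof.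
move=> c1_ge0 c2_ge0 /dsum_glue [c [cs1 cs2]]; exists c; split.
  move=> x /(dsumE D) [y [z [s1y s2z ->]]]; rewrite linearD /= cs1 // cs2 //.
  by rewrite addr_ge0 ?c1_ge0 ?c2_ge0.
move=> x; split.
  move=> [y [z [[s1y c1y] [s2z c2z] ->]]]; split; first by apply/(dsumE D); exists y, z.
  by rewrite linearD /= cs1 // cs2 // c1y c2z addr0.
move=> [/(dsumE D) [y [z [s1y s2z ->]]]]; rewrite linearD /= cs1 // cs2 // => c0.
have := c1_ge0 _ s1y; have := c2_ge0 _ s2z => c2z c1y.
by exists y, z; split=> //; split=> //; lra.
Qed.

Lemma extreme_ray_common_a R : is_extreme_ray s1 R -> is_extreme_ray s2 R -> R a.
Proof.
move=> R1 R2; have [r Rr r0] := has_dim1_neq0 R1.2.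
have s1r := face_sub R1.1 Rr; have s2r := face_sub R2.1 Rr.
have [t rE] := dsum_span_cap D (qspan_sub s1r) (qspan_sub s2r).
have t_ge0 : 0 <= t.
  rewrite rE in s1r.
  exact: strongly_convex_scale_ge0 cone1 sc1 (dsum_a1 D) s1r (dsum_a_neq0 D).
have t0 : t != 0 by apply: contra_neq r0 => t0; rewrite rE t0 scale0r.
apply/(extreme_ray_eq_ray cone1 sc1 R1 Rr r0); exists t^-1; first by rewrite invr_ge0.
by rewrite rE scalerA mulVf // scale1r.
Qed.

Lemma extreme_ray_l_eq_ray_a F : is_extreme_ray s1 F -> F a -> forall x, F x <-> ray a x.
Proof. by move=> Fext Fa; apply: extreme_ray_eq_ray cone1 sc1 Fext Fa (dsum_a_neq0 D). Qed.

Lemma extreme_ray_dsum_l R : is_extreme_ray s1 R -> ~ R a -> is_extreme_ray s R.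
Proof.
move=> [[c1 [c1_ge0 Rc1]] Rdim] Ra.
have [g g_pos] := strictly_positive_functional (dsum_poly_cone2 D) sc2.
have c1a : 0 < dot c1 a.
  rewrite lt_def c1_ge0 ?andbT; last exact: dsum_a1 D.
  by apply/eqP => c1a0; apply/Ra/Rc1; split=> //; apply: dsum_a1 D.
have ga : 0 < dot g a := g_pos _ (dsum_a2 D) (dsum_a_neq0 D).
pose c2 := (dot c1 a / dot g a) *: g.
have dot_c2 x : dot c2 x = dot c1 a / dot g a * dot g x.
  by rewrite /c2 dotC linearZ /= (dotC x).
have c2_ge0 x : s2 x -> 0 <= dot c2 x.
  move=> s2x; rewrite dot_c2; apply: mulr_ge0; first by rewrite divr_ge0 ?ltW.
  by case: (eqVneq x 0) => [->|x0]; [rewrite linear0 | exact/ltW/g_pos].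
have c2_eq0 x : s2 x -> dot c2 x = 0 -> x = 0.
  move=> s2x; apply: contra_eq => x0; rewrite dot_c2 gt_eqF //.
  by apply: mulr_gt0; [exact: divr_gt0 | exact: g_pos].
have c12a : dot c1 a = dot c2 a by rewrite dot_c2 divfK ?gt_eqF.
split=> //; apply: is_face_ext (dsum_face c1_ge0 c2_ge0 c12a) => x; split.
  by move=> [y [z [/Rc1 Ry [s2z /(c2_eq0 _ s2z) ->] ->]]]; rewrite addr0.
move=> Rx; exists x, 0; rewrite addr0 linear0; split=> //; first exact/Rc1.
by split=> //; apply: cone0 cone2.
Qed.

Lemma extreme_ray_dsum_common R :
  is_extreme_ray s1 R -> is_extreme_ray s2 R -> is_extreme_ray s R.
Proof.
move=> R1 R2; have Ra := extreme_ray_common_a R1 R2.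
have [[c1 [c1_ge0 Rc1]] Rdim] := R1; have [[c2 [c2_ge0 Rc2]] _] := R2.
have Rcone := face_is_cone cone1 R1.1.
have c12a : dot c1 a = dot c2 a by rewrite ((Rc1 a).1 Ra).2 ((Rc2 a).1 Ra).2.
split=> //; apply: is_face_ext (dsum_face c1_ge0 c2_ge0 c12a) => x; split.
  by move=> [y [z [/Rc1 Ry /Rc2 Rz ->]]]; exact: (coneD Rcone Ry Rz).
move=> Rx; exists x, 0; rewrite addr0.
by split; [apply/Rc1 | apply/Rc2; apply: cone0 Rcone |].
Qed.

Lemma extreme_ray_dsum_sub F : is_extreme_ray s F ->
  (forall x, F x -> s1 x) \/ (forall x, F x -> s2 x).
Proof.
move=> Fext; have [r Fr r0] := has_dim1_neq0 Fext.2.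
have /(dsumE D) [y [z [s1y s2z rE]]] := face_sub Fext.1 Fr.
have Fy : F y by apply: face_summand Fext.1 (dsum_subl s1y) (dsum_subr s2z) _; rewrite -rE.
have Fz : F z.
  by apply: face_summand Fext.1 (dsum_subr s2z) (dsum_subl s1y) _; rewrite addrC -rE.
have Fray := extreme_ray_eq_ray dsum_is_cone dsum_strongly_convex Fext.
case: (eqVneq y 0) => [y0|y0]; [right | left] => x.
  have z0 : z != 0 by apply: contra_neq r0 => z0; rewrite rE y0 z0 addr0.
  by move/(Fray _ Fz z0); apply: ray_sub cone2 s2z.
by move/(Fray _ Fy y0); apply: ray_sub cone1 s1y.
Qed.

Lemma extreme_ray_dsum_through_a F : is_extreme_ray s F -> F a ->
  is_extreme_ray s1 F /\ is_extreme_ray s2 F.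
Proof.
move=> Fext Fa.
have Fray := extreme_ray_eq_ray dsum_is_cone dsum_strongly_convex Fext Fa (dsum_a_neq0 D).
split; apply: extreme_ray_restrict Fext _ _.
- exact: dsum_subl.
- by move=> x /Fray; apply: ray_sub cone1 (dsum_a1 D).
- exact: dsum_subr.
- by move=> x /Fray; apply: ray_sub cone2 (dsum_a2 D).
Qed.

End DirectSum.

Lemma extreme_ray_dsumP n (s1 s2 s : qset n) a : is_direct_sum s1 s2 s a ->
  forall R, is_extreme_ray s R <->
  [\/ is_extreme_ray s1 R /\ ~ R a, is_extreme_ray s2 R /\ ~ R a
    | is_extreme_ray s1 R /\ is_extreme_ray s2 R].
Proof.
move=> D R; split=> [Rext|].
  have [Ra|Ra] := classic (R a); first exact/Or33/(extreme_ray_dsum_through_a D).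
  case: (extreme_ray_dsum_sub D Rext) => [Rs1|Rs2]; [apply: Or31 | apply: Or32].
    by split=> //; apply: extreme_ray_restrict Rext (dsum_subl D) Rs1.
  by split=> //; apply: extreme_ray_restrict Rext (dsum_subr D) Rs2.
case=> [[R1 Ra]|[R2 Ra]|[R1 R2]].
- exact: (extreme_ray_dsum_l D R1 Ra).
- exact: (extreme_ray_dsum_l (is_direct_sumC D) R2 Ra).
- exact: (extreme_ray_dsum_common D R1 R2).
Qed.

Lemma num_extreme_rays_cat n (S : qset n) p q (g : 'I_p -> qset n) (h : 'I_q -> qset n) :
  (forall i, is_extreme_ray S (g i)) -> (forall j, is_extreme_ray S (h j)) ->
  (forall i i', (forall x, g i x <-> g i' x) -> i = i') ->
  (forall j j', (forall x, h j x <-> h j' x) -> j = j') ->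
  (forall i j, ~ (forall x, g i x <-> h j x)) ->
  (forall F, is_extreme_ray S F ->
     (exists i, forall x, F x <-> g i x) \/ (exists j, forall x, F x <-> h j x)) ->
  num_extreme_rays S (p + q).
Proof.
move=> g_ext h_ext g_inj h_inj gh F_gh.
exists (cat_family g h); split; first exact: (forall_cat_family (P := is_extreme_ray S)).
split=> [k k'|F /F_gh [[i Fi]|[j Fj]]].
- rewrite /cat_family => E; rewrite -(splitK k) -(splitK k').
  case: (split k) E => [i|j]; case: (split k') => [i'|j'] /= E.
  + by rewrite (g_inj _ _ E).
  + by case: (gh i j').
  + by case: (gh i' j) => x; rewrite E.
  + by rewrite (h_inj _ _ E).
- exists (lshift q i).
  by rewrite /cat_family (unsplitK (inl i) : split (lshift q i) = inl i).
- exists (rshift p j).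
  by rewrite /cat_family (unsplitK (inr j) : split (rshift p j) = inr j).
Qed.

Lemma num_extreme_rays_dsum_internal n (s1 s2 s : qset n) a k1 k2 :
  is_direct_sum s1 s2 s a -> num_extreme_rays s1 k1 -> num_extreme_rays s2 k2 ->
  ~ external_type s1 s2 a -> num_extreme_rays s (k1 + k2).
Proof.
move=> D [f1 [f1_ext [f1_inj f1_onto]]] [f2 [f2_ext [f2_inj f2_onto]]] internal.
have f1a i : ~ f1 i a by move=> f1ia; apply: internal; left; exists (f1 i).
have f2a j : ~ f2 j a by move=> f2ja; apply: internal; right; exists (f2 j).
apply: (num_extreme_rays_cat (g := f1) (h := f2)) => // [i|j|i j f12|F].
- by apply/(extreme_ray_dsumP D); apply: Or31.
- by apply/(extreme_ray_dsumP D); apply: Or32.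
- apply: (f1a i); apply: (extreme_ray_common_a D (f1_ext i)).
  by apply: is_extreme_ray_ext (f2_ext j) => x; rewrite f12.
- by case/(extreme_ray_dsumP D) => [[/f1_onto]|[/f2_onto]|[/f1_onto]]; auto.
Qed.

Lemma num_extreme_rays_dsum_external n (s1 s2 s : qset n) a k1 k2 :
  is_direct_sum s1 s2 s a -> num_extreme_rays s1 k1 -> num_extreme_rays s2 k2 ->
  on_extreme_ray s1 a -> num_extreme_rays s (k1 + k2 - 1).
Proof.
move=> D [f1 [f1_ext [f1_inj f1_onto]]] [f2 [f2_ext [f2_inj f2_onto]]] [R [R_ext Ra]].
have ray1 := extreme_ray_l_eq_ray_a D.
have ray2 := extreme_ray_l_eq_ray_a (is_direct_sumC D).
have [i0 Ri0] := f1_onto R R_ext; have f1i0a : f1 i0 a by apply/Ri0.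
have f1a i : f1 i a -> i = i0.
  by move=> f1ia; apply: f1_inj => x; rewrite (ray1 _ (f1_ext i) f1ia) (ray1 _ (f1_ext i0)).
have f1_lift_a i : ~ f1 (lift i0 i) a.
  by move/f1a/eqP; rewrite eq_sym (negbTE (neq_lift i0 i)).
have k1_gt0 : (0 < k1)%N by apply: leq_ltn_trans (ltn_ord i0).
rewrite -{1}(prednK k1_gt0) addSn subn1 /=.
apply: (num_extreme_rays_cat (g := f1 \o lift i0) (h := f2)) => [i|j|i i'|//|i j f12|F].
- by apply/(extreme_ray_dsumP D); apply: Or31; split; [apply: f1_ext | apply: f1_lift_a].
- apply/(extreme_ray_dsumP D); have [f2ja|f2ja] := classic (f2 j a); last exact: Or32.
  apply: Or33; split=> //; apply: is_extreme_ray_ext (f1_ext i0) => x.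
  by rewrite (ray2 _ (f2_ext j) f2ja) (ray1 _ (f1_ext i0)).
- by move/f1_inj/lift_inj.
- apply: (f1_lift_a i); apply: (extreme_ray_common_a D (f1_ext _)).
  by apply: is_extreme_ray_ext (f2_ext j) => x; rewrite -f12.
- case/(extreme_ray_dsumP D) => [[/f1_onto [i Fi] Fa]|[/f2_onto]|[_ /f2_onto]];
    [left | by right | by right].
  have i0i : i0 != i by apply/eqP => i0E; apply/Fa/Fi; rewrite -i0E.
  by have [j iE _] := unlift_some i0i; exists j => x; rewrite Fi iE.
Qed.

Theorem theorem2p4 (n : nat) (s1 s2 : qset n) (n1 n2 k1 k2 : nat) (a : vec n) :
  poly_cone s1 -> poly_cone s2 ->
  strongly_convex s1 -> strongly_convex s2 ->
  has_dim s1 n1 -> has_dim s2 n2 ->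
  num_extreme_rays s1 k1 -> num_extreme_rays s2 k2 ->
  a != 0 -> s1 a -> s2 a ->
  (forall x, (qspan s1 x /\ qspan s2 x) <-> exists t : rat, x = t *: a) ->
  let s := qpos (fun x => s1 x \/ s2 x) in
  has_dim s (n1 + n2 - 1)%N /\
  (~ external_type s1 s2 a -> num_extreme_rays s (k1 + k2)%N) /\
  (external_type s1 s2 a -> num_extreme_rays s (k1 + k2 - 1)%N).
Proof.
move=> poly1 poly2 sc1 sc2 dim1 dim2 num1 num2 a0 s1a s2a span_cap s.
have D : is_direct_sum s1 s2 s a.
  split=> // [x s1x s2x|x]; first exact: (span_cap x).1.
  exact: qpos_union_msum (poly_cone_is_cone poly1) (poly_cone_is_cone poly2).
split; first exact: (has_dim_dsum D dim1 dim2).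
split; first exact: num_extreme_rays_dsum_internal D num1 num2.
case=> [a1|a2]; first exact: num_extreme_rays_dsum_external D num1 num2 a1.
by rewrite addnC; apply: num_extreme_rays_dsum_external (is_direct_sumC D) num2 num1 a2.
Qed.
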